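(* Let $\widehat{A} = A + \epsilon B$ with $A, B \in \mathbb{R}^{n\times n}$ and $Ind(\widehat{A}) = k$. Then a dual matrix $\widehat{X} = X + \epsilon R$ with $X,R\in\mathbb{R}^{n\times n}$ is a dual Drazin generalized inverse of $\widehat{A}$ if and only if $X = A^{D}$ and $$A^kA^DB+A^kRA+\Big(\sum_{i=0}^{k-1}A^{k-1-i}BA^{i}\Big)(A^DA-I)=0,$$ $$R=A^{D}AR+A^{D}BA^{D}+RAA^{D},$$ $$AR + BA^{D} = RA + A^DB.$$
   Context: A dual number is $a+\epsilon b$ with $a,b\in\mathbb{R}$, where the dual unit $\epsilon$ satisfies $\epsilon\neq 0$, $\epsilon^2=0$ and commutes with real numbers. A dual matrix is $\widehat{A}=A+\epsilon B$ with $A,B$ real matrices; sums and products are computed formally using $\epsilon^2=0$, e.g. $(A+\epsilon B)(C+\epsilon D)=AC+\epsilon(AD+BC)$, and two dual matrices are equal iff their real parts and their dual parts are equal. $\mathbb{D}^n$ denotes the set of dual column vectors of length $n$. For a square dual matrix $\widehat{A}$, $R(\widehat{A}^k)=\{\widehat{A}^k\widehat{z}:\widehat{z}\in\mathbb{D}^n\}$, and the dual index $Ind(\widehat{A})$ is the smallest nonnegative integer $k$ with $R(\widehat{A}^k)=R(\widehat{A}^{k+1})$. For a real square matrix $A$, $A^D$ denotes its Drazin inverse. For $Ind(\widehat{A})=k$, a dual matrix $\widehat{X}$ is a dual Drazin generalized inverse (DDGI) of $\widehat{A}$ if $\widehat{A}^{k}\widehat{X}\widehat{A} = \widehat{A}^{k}$,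 $\widehat{X}\widehat{A}\widehat{X} = \widehat{X}$ and $\widehat{A}\widehat{X} =\widehat{X}\widehat{A}$. *)

From HB Require Import structures.
From mathcomp Require Import all_boot all_order all_algebra.
From mathcomp Require Import reals.
Set Implicit Arguments. Unset Strict Implicit. Unset Printing Implicit Defensive.
Import Order.TTheory GRing.Theory Num.Theory.
Local Open Scope ring_scope.

Section Dual.
Variables (R : realType) (n : nat).

(* A dual matrix A + eps B is represented by the pair (A, B). *)
Definition dmat := ('M[R]_n * 'M[R]_n)%type.
(* A dual column vector z0 + eps z1 is the pair (z0, z1). *)
Definition dvec := ('cV[R]_n * 'cV[R]_n)%type.

(* (A + eps B)(C + eps D) = AC + eps (AD + BC) *)
Definition dmul (P Q : dmat) : dmat :=
  (P.1 *m Q.1, P.1 *m Q.2 + P.2 *m Q.1).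
Definition dmulv (P : dmat) (z : dvec) : dvec :=
  (P.1 *m z.1, P.1 *m z.2 + P.2 *m z.1).
Definition done : dmat := (1%:M, 0).
Definition dpow (P : dmat) (k : nat) : dmat := iter k (dmul P) done.

Definition drange_stable (P : dmat) (k : nat) : Prop :=
  forall y : dvec,
    (exists z : dvec, y = dmulv (dpow P k) z) <->
    (exists z : dvec, y = dmulv (dpow P k.+1) z).

Definition dual_index_is (P : dmat) (k : nat) : Prop :=
  drange_stable P k /\ forall j, (j < k)%N -> ~ drange_stable P j.

Definition is_DDGI (P : dmat) (k : nat) (Y : dmat) : Prop :=
  [/\ dmul (dmul (dpow P k) Y) P = dpow P k,
      dmul (dmul Y P) Y = Y &
      dmul P Y = dmul Y P].

Definition mpow (A : 'M[R]_n) (k : nat) : 'M[R]_n := iter k (mulmx A) 1%:M.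

Definition range_stable (A : 'M[R]_n) (m : nat) : Prop :=
  forall y : 'cV[R]_n,
    (exists z : 'cV[R]_n, y = mpow A m *m z) <->
    (exists z : 'cV[R]_n, y = mpow A m.+1 *m z).

Definition index_is (A : 'M[R]_n) (m : nat) : Prop :=
  range_stable A m /\ forall j, (j < m)%N -> ~ range_stable A j.

(* X is the Drazin inverse A^D of A:  A^(m+1) X = A^m, XAX = X, AX = XA
   with m = Ind(A).  (These equations determine A^D uniquely.) *)
Definition is_drazin (A X : 'M[R]_n) : Prop :=
  exists m, index_is A m /\
    [/\ mpow A m.+1 *m X = mpow A m, X *m A *m X = X & A *m X = X *m A].

End Dual.

From HB Require Import structures.
From mathcomp Require Import all_boot all_order all_algebra.
From mathcomp Require Import reals.
From mathcomp Require Import zify.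
From Stdlib Require Import Classical.
Import Order.TTheory GRing.Theory Num.Theory.
Local Open Scope ring_scope.

(* Since (A + eps B)^k = A^k + eps \sum_i A^(k-1-i) B A^i, each of the three
   DDGI equations splits into a real and a dual part, and the dual parts are
   the three displayed equations.  The real parts are the Drazin equations of A
   with exponent k in place of Ind(A).  They still characterize A^D: projecting
   the dual range condition onto real parts gives Ind(A) <= k, and once
   A^m = A^(m+1) W (range stability at m), the equation A^(j+1) X = A^j for an
   exponent j >= m is equivalent to the one at m. *)

Set Implicit Arguments.
Unset Strict Implicit.
Unset Printing Implicit Defensive.

Section DrazinExponent.
Variables (T : pzRingType) (a x : T).

Lemma drazin_eq_raise m k : (m <= k)%N ->
  a ^+ m.+1 * x = a ^+ m -> a ^+ k.+1 * x = a ^+ k.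
Proof. by move=> /subnK <- Dm; rewrite -addnS !exprD -mulrA Dm. Qed.

Hypothesis comm_ax : GRing.comm a x.

Lemma drazin_eq_lower m k w : a ^+ m = a ^+ m.+1 * w -> (m <= k)%N ->
  a ^+ k.+1 * x = a ^+ k -> a ^+ m.+1 * x = a ^+ m.
Proof.
move=> Dm /subnK <-; set j := (k - m)%N => Dk.
have Dm_j : a ^+ m = a ^+ (j + m) * w ^+ j.
  elim: j {Dk} => [|j IH]; first by rewrite add0n mulr1.
  by rewrite {1}IH exprD {1}Dm !mulrA -exprD -mulrA -exprS addSnnS.
have comm_x_pow p : GRing.comm (a ^+ p) x :=
  commr_sym (commrX p (commr_sym comm_ax)).
rewrite comm_x_pow exprS {1}Dm_j !mulrA -(mulrA x) -exprS.
by rewrite -comm_x_pow Dk -Dm_j.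
Qed.

End DrazinExponent.

Section DualMatrices.
Variables (R : realType) (n : nat).
Implicit Types (A B X Rm : 'M[R]_n).

Lemma mpowE A k : mpow A k = A ^+ k.
Proof. by elim: k => // k IH; rewrite exprS -IH -mulmxE. Qed.

Lemma dpowE A B k : dpow (A, B) k =
  (mpow A k, \sum_(i < k) mpow A (k.-1 - i) *m B *m mpow A i).
Proof.
elim: k => [|k IH]; first by rewrite big_ord0.
rewrite /dpow iterS -/(dpow _ k) IH /dmul /= big_ord_recr /= subnn mul1mx.
congr (_, _ + _); rewrite mulmx_sumr; apply: eq_bigr => i _.
have -> : (k - i = (k.-1 - i).+1)%N by have := ltn_ord i; lia.
by rewrite !mulmxA.
Qed.

Lemma drange_stable_fst A B k : drange_stable (A, B) k -> range_stable A k.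
Proof.
move=> dstab y; split=> [[z ->] | [z ->]].
  have [z' /(congr1 fst)] :=
    (dstab (dmulv (dpow (A, B) k) (z, 0))).1 (ex_intro _ _ erefl).
  by rewrite /dmulv !dpowE /= => ->; exists z'.1.
by exists (A *m z); rewrite mulmxA !mpowE mulmxE -exprSr.
Qed.

Lemma range_stable_factor A m : range_stable A m ->
  exists W, mpow A m = mpow A m.+1 *m W.
Proof.
move=> stab.
have /fin_all_exists [z Dcol] j : exists z, col j (mpow A m) = mpow A m.+1 *m z.
  by apply/(stab _).1; exists (delta_mx j 0); rewrite colE.
exists (\matrix_(i, j) z j i 0); apply/matrixP => i j.
have := congr1 (fun v : 'cV_n => v i 0) (Dcol j); rewrite !mxE => ->.
by apply: eq_bigr => l _; rewrite mxE.
Qed.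

Lemma index_exists_le A k : range_stable A k -> exists2 m, index_is A m & (m <= k)%N.
Proof.
elim/ltn_ind: k => k IH stab_k.
have [[j lt_jk stab_j] | no_smaller] :=
  classic (exists2 j, (j < k)%N & range_stable A j).
  have [m idx_m le_mj] := IH j lt_jk stab_j.
  by exists m; last exact: leq_trans le_mj (ltnW lt_jk).
by exists k => //; split=> // j lt_jk stab_j; apply: no_smaller; exists j.
Qed.

Lemma is_drazin_iff A X k : range_stable A k ->
  is_drazin A X <->
  [/\ mpow A k *m X *m A = mpow A k, X *m A *m X = X & A *m X = X *m A].
Proof.
move=> stab_k; rewrite !mpowE mulmxE.
have drazin_kE : A *m X = X *m A ->
    (A ^+ k * X * A = A ^+ k) <-> (A ^+ k.+1 * X = A ^+ k).
  by move=> comm_AX; rewrite exprSr -!mulrA -mulmxE comm_AX.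
split=> [[m [[_ min_m] [Dm XAX comm_AX]]] | [Dk XAX comm_AX]].
  have le_mk : (m <= k)%N by rewrite leqNgt; apply/negP => /min_m.
  split=> //; apply/drazin_kE => //.
  by apply: (drazin_eq_raise le_mk); rewrite -!mpowE -mulmxE Dm.
have [m idx_m le_mk] := index_exists_le stab_k; exists m; split=> //; split=> //.
have [W] := range_stable_factor idx_m.1; rewrite !mpowE mulmxE => Dm.
by apply: (drazin_eq_lower comm_AX Dm le_mk); apply/drazin_kE.
Qed.

Lemma is_DDGI_iff A B X Rm k :
  is_DDGI (A, B) k (X, Rm) <->
  [/\ mpow A k *m X *m A = mpow A k, X *m A *m X = X & A *m X = X *m A] /\
  [/\ mpow A k *m X *m B + mpow A k *m Rm *m A
        + (\sum_(i < k) mpow A (k.-1 - i) *m B *m mpow A i) *m (X *m A - 1%:M)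
        = 0,
      Rm = X *m A *m Rm + X *m B *m X + Rm *m A *m X &
      A *m Rm + B *m X = Rm *m A + X *m B].
Proof.
rewrite /is_DDGI dpowE /dmul /=; set S := \sum_(i < k) _.
have dual1E : mpow A k *m X *m B + mpow A k *m Rm *m A + S *m (X *m A - 1%:M)
    = mpow A k *m X *m B + (mpow A k *m Rm + S *m X) *m A - S.
  by rewrite mulmxBr mulmx1 mulmxDl !mulmxA !addrA.
rewrite dual1E; split=> [[/pair_equal_spec[R1 D1] /pair_equal_spec[R2 D2]
                          /pair_equal_spec[R3 D3]] | [[R1 R2 R3] [D1 D2 D3]]].
  split; split=> //.
  - by rewrite D1 subrr.
  - by rewrite -{1}D2 mulmxDl addrA.
  - by rewrite D3 addrC.
split; congr (_, _) => //.
- exact: subr0_eq D1.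
- by rewrite mulmxDl addrA -D2.
- by rewrite D3 addrC.
Qed.

End DualMatrices.

Theorem mainTheorem1 (R : realType) (n k : nat) (A B X Rm : 'M[R]_n) :
  dual_index_is (A, B) k ->
  (is_DDGI (A, B) k (X, Rm) <->
   [/\ is_drazin A X,
       mpow A k *m X *m B + mpow A k *m Rm *m A
         + (\sum_(i < k) mpow A (k.-1 - i) *m B *m mpow A i) *m (X *m A - 1%:M)
         = 0,
       Rm = X *m A *m Rm + X *m B *m X + Rm *m A *m X &
       A *m Rm + B *m X = Rm *m A + X *m B]).
Proof.
move=> [/drange_stable_fst stab_k _].
have drazinE := is_drazin_iff X stab_k.
by rewrite is_DDGI_iff; split=> [[/drazinE ? [? ? ?]] | [/drazinE ? ? ? ?]].
Qed.
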